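(* Let $G=\mathbb R^2\times SL(2,\mathbb C)$ be the simply connected Lie group with Lie algebra $2\mathbb R\oplus\mathfrak{sl}(2,\mathbb C)$. Let $\Delta\subset SL(2,\mathbb C)$ be a cocompact discrete subgroup, and let $\Gamma=\mathbb Z\times\mathbb Z\times\Delta\subset G$. Then the compact manifold $G/\Gamma$ admits an invariant strong HPKT structure.
   Context: An almost hyper-paracomplex structure on a manifold is a triple $(J_1,J_2,J_3)$ of endomorphisms of the tangent bundle with $J_1^2=J_2^2=\mathrm{id}$, $J_3^2=-\mathrm{id}$ and $J_1J_2=-J_2J_1=J_3$. It is hyper-paracomplex if each $J_a$ has vanishing Nijenhuis tensor. A metric $g$ is hyperparahermitian if $g(J_1X,J_1Y)=g(J_2X,J_2Y)=-g(J_3X,J_3Y)=-g(X,Y)$. An HPKT structure is a hyper-paracomplex structure together with a hyperparahermitian metric admitting a linear connection $\nabla$ with $\nabla g=\nabla J_a=0$ ($a=1,2,3$) and totally skew-symmetric torsion, i.e. $T^\nabla(X,Y,Z):=g(T^\nabla(X,Y),Z)$ is a 3-form. It is strong if $dT^\nabla=0$. ''Invariant'' on $G/\Gamma$ means induced by left-invariant structures on $G$, where $\Gamma$ acts by left translations. *)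

From HB Require Import structures.
From mathcomp Require Import all_boot all_order all_algebra.
From mathcomp Require Import reals.
From mathcomp.real_closed Require Import complex.
Set Implicit Arguments. Unset Strict Implicit. Unset Printing Implicit Defensive.
Import Order.TTheory GRing.Theory Num.Theory.
Local Open Scope ring_scope.

Section LieAlg.
Variable R : realType.

(* The real Lie algebra  g = 2R (+) sl(2,C), realified, identified with 'rV[R]_8.
   Coordinates: x0, x1 : the abelian factor R^2;
   sl(2,C) element  [[h, e], [f, -h]]  with
   h = x2 + i x3,  e = x4 + i x5,  f = x6 + i x7. *)
Definition V := 'rV[R]_8.

Definition cc (x : V) (k : nat) : R[i] := Complex (x 0 (inord k)) (x 0 (inord k.+1)).

Definition slmat (x : V) : 'M[R[i]]_2 :=
  \matrix_(a < 2, b < 2)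
    (if (a == 0 :> nat) && (b == 0 :> nat) then cc x 2
     else if (a == 0 :> nat) then cc x 4
     else if (b == 0 :> nat) then cc x 6
     else - cc x 2).

(* coordinates of a (traceless) complex 2x2 matrix, back in V with zero R^2 part *)
Definition of_slmat (M : 'M[R[i]]_2) : V :=
  \row_(k < 8)
    (if (k == 2 :> nat) then complex.Re (M 0 0) else if (k == 3 :> nat) then complex.Im (M 0 0)
     else if (k == 4 :> nat) then complex.Re (M 0 1) else if (k == 5 :> nat) then complex.Im (M 0 1)
     else if (k == 6 :> nat) then complex.Re (M 1 0) else if (k == 7 :> nat) then complex.Im (M 1 0)
     else 0).

Definition lieb (x y : V) : V :=
  of_slmat (slmat x *m slmat y - slmat y *m slmat x).

(* left-invariant endomorphisms (acting on row vectors) *)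
Definition app (J : 'M[R]_8) (x : V) : V := x *m J.

Definition nijenhuis (J : 'M[R]_8) (x y : V) : V :=
  lieb (app J x) (app J y) - app J (lieb (app J x) y) - app J (lieb x (app J y))
  + app J (app J (lieb x y)).

Definition almost_hyper_paracomplex (J1 J2 J3 : 'M[R]_8) : Prop :=
  (forall x, app J1 (app J1 x) = x) /\ (forall x, app J2 (app J2 x) = x) /\
  (forall x, app J3 (app J3 x) = - x) /\
  (* J1 o J2 = J3 and J2 o J1 = - J3 as endomorphisms x |-> x *m J;
     since app (A *m B) x = app B (app A x), J1 o J2 is the matrix J2 *m J1 *)
  (forall x, app J1 (app J2 x) = app J3 x) /\
  (forall x, app J2 (app J1 x) = - app J3 x).

Definition hyper_paracomplex (J1 J2 J3 : 'M[R]_8) : Prop :=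
  almost_hyper_paracomplex J1 J2 J3 /\
  forall x y, nijenhuis J1 x y = 0 /\ nijenhuis J2 x y = 0 /\ nijenhuis J3 x y = 0.

Definition gf (g : 'M[R]_8) (x y : V) : R := (x *m g *m y^T) 0 0.

Definition is_metric (g : 'M[R]_8) : Prop := g^T = g /\ \det g != 0.

Definition hyperparahermitian (g J1 J2 J3 : 'M[R]_8) : Prop :=
  is_metric g /\ forall x y,
    gf g (app J1 x) (app J1 y) = - gf g x y /\
    gf g (app J2 x) (app J2 y) = - gf g x y /\
    - gf g (app J3 x) (app J3 y) = - gf g x y.

(* left-invariant linear connection: nabla_{e_k} is the endomorphism nab k *)
Definition nabla (nab : 'I_8 -> 'M[R]_8) (x y : V) : V :=
  \sum_(k < 8) x 0 k *: app (nab k) y.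

Definition torsion (nab : 'I_8 -> 'M[R]_8) (x y : V) : V :=
  nabla nab x y - nabla nab y x - lieb x y.

Definition torsion3 (g : 'M[R]_8) (nab : 'I_8 -> 'M[R]_8) (x y z : V) : R :=
  gf g (torsion nab x y) z.

(* exterior derivative of a left-invariant 3-form (Chevalley-Eilenberg) *)
Definition d3 (T : V -> V -> V -> R) (x0 x1 x2 x3 : V) : R :=
    - T (lieb x0 x1) x2 x3 + T (lieb x0 x2) x1 x3 - T (lieb x0 x3) x1 x2
    - T (lieb x1 x2) x0 x3 + T (lieb x1 x3) x0 x2 - T (lieb x2 x3) x0 x1.

Definition HPKT_connection (g J1 J2 J3 : 'M[R]_8) (nab : 'I_8 -> 'M[R]_8) : Prop :=
  (forall x y z, gf g (nabla nab x y) z + gf g y (nabla nab x z) = 0) /\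
  (forall x y, nabla nab x (app J1 y) = app J1 (nabla nab x y) /\
               nabla nab x (app J2 y) = app J2 (nabla nab x y) /\
               nabla nab x (app J3 y) = app J3 (nabla nab x y)) /\
  (forall x y z, torsion3 g nab x y z = - torsion3 g nab y x z /\
                 torsion3 g nab x y z = - torsion3 g nab x z y).

Definition invariant_strong_HPKT (g J1 J2 J3 : 'M[R]_8) : Prop :=
  hyper_paracomplex J1 J2 J3 /\ hyperparahermitian g J1 J2 J3 /\
  exists nab, HPKT_connection g J1 J2 J3 nab /\
    forall x0 x1 x2 x3, d3 (torsion3 g nab) x0 x1 x2 x3 = 0.

End LieAlg.

From HB Require Import structures.
From mathcomp Require Import all_boot all_order all_algebra.
From mathcomp Require Import reals ring.
From mathcomp.real_closed Require Import complex.
Set Implicit Arguments. Unset Strict Implicit. Unset Printing Implicit Defensive.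
Import Order.TTheory GRing.Theory Num.Theory.
Local Open Scope ring_scope.

(* The form g = 2 (dx0^2 - dx1^2) - Re tr(XY) on 2R (+) sl(2,C) is ad-invariant.
   For an ad-invariant metric, the connection with nabla_X Y = 0 on left-invariant
   fields (the Cartan-Schouten (-)-connection) preserves g and every left-invariant
   endomorphism, and its torsion -[X,Y] gives the Cartan 3-form -g([X,Y],Z), which is
   totally skew by invariance and closed by the Jacobi identity.  It then only remains
   to exhibit an integrable left-invariant hyper-paracomplex structure for which g is
   hyperparahermitian, which is a computation in coordinates. *)

Section BilinearForm.
Variable R : realType.
Implicit Types (g : 'M[R]_8) (x y z : V R).

Lemma gf0l g y : gf g 0 y = 0.
Proof. by rewrite /gf !mul0mx mxE. Qed.

Lemma gf0r g x : gf g x 0 = 0.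
Proof. by rewrite /gf trmx0 mulmx0 mxE. Qed.

Lemma gfNl g x y : gf g (- x) y = - gf g x y.
Proof. by rewrite /gf !mulNmx mxE. Qed.

Lemma gfDr g x y z : gf g x (y + z) = gf g x y + gf g x z.
Proof. by rewrite /gf linearD /= mulmxDr mxE. Qed.

Lemma gf_sym g x y : g^T = g -> gf g x y = gf g y x.
Proof.
move=> gT; rewrite /gf; transitivity ((x *m g *m y^T)^T 0 0); first by rewrite [RHS]mxE.
by rewrite !trmx_mul trmxK gT mulmxA.
Qed.

End BilinearForm.

Section Coordinates.
Variable R : realType.

Definition vec8 (a0 a1 a2 a3 a4 a5 a6 a7 : R) : V R :=
  \row_(k < 8) nth 0 [:: a0; a1; a2; a3; a4; a5; a6; a7] k.

Lemma vec8_eta (x : V R) : x = vec8 (x 0 (inord 0)) (x 0 (inord 1)) (x 0 (inord 2))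
  (x 0 (inord 3)) (x 0 (inord 4)) (x 0 (inord 5)) (x 0 (inord 6)) (x 0 (inord 7)).
Proof.
apply/rowP => k; rewrite mxE.
by case: k => [[|[|[|[|[|[|[|[|k]]]]]]]] Hk] //=;
  congr (x _ _); apply/val_inj; rewrite /= inordK.
Qed.

Lemma vec8_ind (P : V R -> Prop) :
  (forall a0 a1 a2 a3 a4 a5 a6 a7, P (vec8 a0 a1 a2 a3 a4 a5 a6 a7)) -> forall x, P x.
Proof. by move=> Pvec8 x; rewrite (vec8_eta x). Qed.

Lemma vec8D a0 a1 a2 a3 a4 a5 a6 a7 b0 b1 b2 b3 b4 b5 b6 b7 :
  vec8 a0 a1 a2 a3 a4 a5 a6 a7 + vec8 b0 b1 b2 b3 b4 b5 b6 b7 =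
  vec8 (a0+b0) (a1+b1) (a2+b2) (a3+b3) (a4+b4) (a5+b5) (a6+b6) (a7+b7).
Proof.
apply/rowP => k; rewrite !mxE.
by case: k => [[|[|[|[|[|[|[|[|k]]]]]]]] Hk] //=; rewrite addr0.
Qed.

Lemma vec8N a0 a1 a2 a3 a4 a5 a6 a7 :
  - vec8 a0 a1 a2 a3 a4 a5 a6 a7 = vec8 (-a0) (-a1) (-a2) (-a3) (-a4) (-a5) (-a6) (-a7).
Proof.
apply/rowP => k; rewrite !mxE.
by case: k => [[|[|[|[|[|[|[|[|k]]]]]]]] Hk] //=; rewrite oppr0.
Qed.

Lemma vec8_eq0 a0 a1 a2 a3 a4 a5 a6 a7 :
  a0 = 0 -> a1 = 0 -> a2 = 0 -> a3 = 0 -> a4 = 0 -> a5 = 0 -> a6 = 0 -> a7 = 0 ->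
  vec8 a0 a1 a2 a3 a4 a5 a6 a7 = 0.
Proof.
move=> -> -> -> -> -> -> -> ->; apply/rowP => k; rewrite !mxE.
by case: k => [[|[|[|[|[|[|[|[|k]]]]]]]] Hk].
Qed.

Lemma lieb_vec8 a0 a1 a2 a3 a4 a5 a6 a7 b0 b1 b2 b3 b4 b5 b6 b7 :
  lieb (vec8 a0 a1 a2 a3 a4 a5 a6 a7) (vec8 b0 b1 b2 b3 b4 b5 b6 b7) =
  vec8 0 0 ((a4*b6 - a5*b7) - (a6*b4 - a7*b5)) ((a4*b7 + a5*b6) - (a6*b5 + a7*b4))
   (2*((a2*b4 - a3*b5) - (a4*b2 - a5*b3))) (2*((a2*b5 + a3*b4) - (a4*b3 + a5*b2)))
   (2*((a6*b2 - a7*b3) - (a2*b6 - a3*b7))) (2*((a6*b3 + a7*b2) - (a2*b7 + a3*b6))).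
Proof.
apply/rowP => k; rewrite /lieb /of_slmat /slmat /cc !mxE.
case: k => [[|[|[|[|[|[|[|[|k]]]]]]]] Hk] //=;
rewrite ?mxE !big_ord_recr !big_ord0 /= !mxE /= !inordK //= ?add0r; ring.
Qed.

End Coordinates.

Section LieBracket.
Variable R : realType.
Implicit Types x y z : V R.

Lemma lieb_anti x y : lieb y x = - lieb x y.
Proof.
elim/vec8_ind: x => a0 a1 a2 a3 a4 a5 a6 a7; elim/vec8_ind: y => b0 b1 b2 b3 b4 b5 b6 b7.
rewrite !lieb_vec8 vec8N; congr vec8; ring.
Qed.

Lemma lieb_jacobi x y z : lieb x (lieb y z) = lieb (lieb x y) z + lieb y (lieb x z).
Proof.
elim/vec8_ind: x => a0 a1 a2 a3 a4 a5 a6 a7; elim/vec8_ind: y => b0 b1 b2 b3 b4 b5 b6 b7.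
elim/vec8_ind: z => c0 c1 c2 c3 c4 c5 c6 c7.
rewrite !lieb_vec8 vec8D; congr vec8; ring.
Qed.

End LieBracket.

Section InvariantForm.
Variables (V : zmodType) (R : comPzRingType) (br : V -> V -> V) (b : V -> V -> R).
Hypothesis br_anti : forall x y, br y x = - br x y.
Hypothesis br_jacobi : forall x y z, br x (br y z) = br (br x y) z + br y (br x z).
Hypothesis b_sym : forall x y, b x y = b y x.
Hypothesis b_invariant : forall x y z, b (br x y) z = b x (br y z).
Hypothesis b_Nl : forall x y, b (- x) y = - b x y.
Hypothesis b_Dr : forall x y z, b x (y + z) = b x y + b x z.

Definition cartan3 x y z := - b (br x y) z.

Lemma cartan3_anti12 x y z : cartan3 x y z = - cartan3 y x z.
Proof. by rewrite /cartan3 [br y x]br_anti b_Nl opprK. Qed.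

Lemma cartan3_anti23 x y z : cartan3 x y z = - cartan3 x z y.
Proof.
by rewrite /cartan3 opprK [b (br x z) y]b_sym -b_invariant [br y x]br_anti b_Nl.
Qed.

Lemma cartan3_closed x0 x1 x2 x3 :
  - cartan3 (br x0 x1) x2 x3 + cartan3 (br x0 x2) x1 x3 - cartan3 (br x0 x3) x1 x2
  - cartan3 (br x1 x2) x0 x3 + cartan3 (br x1 x3) x0 x2 - cartan3 (br x2 x3) x0 x1 = 0.
Proof.
have b_invariant2 x y z t : b (br (br x y) z) t = b (br x y) (br z t).
  exact: b_invariant.
have b_Nr x y : b x (- y) = - b x y by rewrite b_sym b_Nl b_sym.
(* Every term becomes b([xi,xj],[xk,xl]); symmetry pairs them up, invariance moves x0
   to the front, and what is left in the second slot vanishes by Jacobi. *)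
rewrite /cartan3 !b_invariant2.
rewrite [b (br x1 x2) _]b_sym [b (br x1 x3) _]b_sym [b (br x2 x3) _]b_sym.
rewrite !b_invariant (br_jacobi x1 x2 x3) (br_anti (br x1 x2) x3) b_Dr b_Nr.
ring.
Qed.

End InvariantForm.

Section CartanSchoutenConnection.
Variable R : realType.
Implicit Types x y z : V R.

Definition cartan_schouten : 'I_8 -> 'M[R]_8 := fun=> 0.

Lemma nabla_cartan_schouten x y : nabla cartan_schouten x y = 0.
Proof. by rewrite /nabla big1 // => k _; rewrite /app mulmx0 scaler0. Qed.

Lemma torsion3_cartan_schouten g x y z :
  torsion3 g cartan_schouten x y z = cartan3 (@lieb R) (gf g) x y z.
Proof. by rewrite /torsion3 /torsion !nabla_cartan_schouten subrr sub0r gfNl. Qed.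

(* Rewriting under [d3] directly would make the matcher unfold distinct [lieb] terms. *)
Lemma d3_ext (T T' : V R -> V R -> V R -> R) :
  (forall x y z, T x y z = T' x y z) ->
  forall x0 x1 x2 x3, d3 T x0 x1 x2 x3 = d3 T' x0 x1 x2 x3.
Proof.
by move=> eqT x0 x1 x2 x3; rewrite /d3; congr (- _ + _ - _ - _ + _ - _); apply: eqT.
Qed.

Variable g : 'M[R]_8.
Hypothesis g_sym : g^T = g.
Hypothesis g_invariant : forall x y z, gf g (lieb x y) z = gf g x (lieb y z).

Let g_symmetric x y : gf g x y = gf g y x := gf_sym x y g_sym.

Lemma HPKT_connection_cartan_schouten J1 J2 J3 :
  HPKT_connection g J1 J2 J3 cartan_schouten.
Proof.
split; [|split].
- by move=> x y z; rewrite !nabla_cartan_schouten gf0l gf0r addr0.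
- by move=> x y; rewrite !nabla_cartan_schouten /app !mul0mx.
- move=> x y z; rewrite !torsion3_cartan_schouten; split.
    exact: (cartan3_anti12 (@lieb_anti R) (@gfNl R g)).
  exact: (cartan3_anti23 (@lieb_anti R) g_symmetric g_invariant (@gfNl R g)).
Qed.

Lemma d3_torsion3_cartan_schouten x0 x1 x2 x3 :
  d3 (torsion3 g cartan_schouten) x0 x1 x2 x3 = 0.
Proof.
rewrite (d3_ext (torsion3_cartan_schouten g)).
exact: (cartan3_closed (@lieb_anti R) (@lieb_jacobi R) g_symmetric g_invariant
          (@gfNl R g) (@gfDr R g)).
Qed.

End CartanSchoutenConnection.

Lemma invariant_strong_HPKT_of_ad_invariant (R : realType) (g J1 J2 J3 : 'M[R]_8) :
  (forall x y z, gf g (lieb x y) z = gf g x (lieb y z)) ->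
  hyper_paracomplex J1 J2 J3 -> hyperparahermitian g J1 J2 J3 ->
  invariant_strong_HPKT g J1 J2 J3.
Proof.
move=> g_invariant hpc hph; have [[g_sym _] _] := hph.
split=> //; split=> //; exists (cartan_schouten R); split.
  exact: HPKT_connection_cartan_schouten.
exact: d3_torsion3_cartan_schouten.
Qed.

Section ExplicitStructure.
Variable R : realType.
Implicit Types x y : V R.

Definition matrix8 (rows : seq (seq R)) : 'M[R]_8 :=
  \matrix_(i < 8, j < 8) nth 0 (nth [::] rows i) j.

Definition J1m := matrix8
 [:: [:: 0;0;1;0;0;0;0;0]; [:: 0;0;0;1;0;0;0;0]; [:: 1;0;0;0;0;0;0;0]; [:: 0;1;0;0;0;0;0;0];
     [:: 0;0;0;0;-1;0;0;0]; [:: 0;0;0;0;0;-1;0;0]; [:: 0;0;0;0;0;0;1;0]; [:: 0;0;0;0;0;0;0;1]].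

Definition J2m := matrix8
 [:: [:: 0;0;0;0;1;0;1;0]; [:: 0;0;0;0;0;1;0;1]; [:: 0;0;0;0;1;0;-1;0]; [:: 0;0;0;0;0;1;0;-1];
     [:: 2^-1;0;2^-1;0;0;0;0;0]; [:: 0;2^-1;0;2^-1;0;0;0;0];
     [:: 2^-1;0;-2^-1;0;0;0;0;0]; [:: 0;2^-1;0;-2^-1;0;0;0;0]].

Definition J3m := J2m *m J1m.

(* gf gm x y = 2 (x0 y0 - x1 y1) - Re tr(XY), X and Y the sl(2,C) parts of x and y. *)
Definition gm := matrix8
 [:: [:: 2;0;0;0;0;0;0;0]; [:: 0;-2;0;0;0;0;0;0]; [:: 0;0;-2;0;0;0;0;0]; [:: 0;0;0;2;0;0;0;0];
     [:: 0;0;0;0;0;0;-1;0]; [:: 0;0;0;0;0;0;0;1]; [:: 0;0;0;0;-1;0;0;0]; [:: 0;0;0;0;0;1;0;0]].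

Definition gm_inv := matrix8
 [:: [:: 2^-1;0;0;0;0;0;0;0]; [:: 0;-2^-1;0;0;0;0;0;0];
     [:: 0;0;-2^-1;0;0;0;0;0]; [:: 0;0;0;2^-1;0;0;0;0];
     [:: 0;0;0;0;0;0;-1;0]; [:: 0;0;0;0;0;0;0;1]; [:: 0;0;0;0;-1;0;0;0]; [:: 0;0;0;0;0;1;0;0]].

Lemma app_mul (A B : 'M[R]_8) x : app (A *m B) x = app B (app A x).
Proof. by rewrite /app mulmxA. Qed.

Lemma J1E a0 a1 a2 a3 a4 a5 a6 a7 :
  app J1m (vec8 a0 a1 a2 a3 a4 a5 a6 a7) = vec8 a2 a3 a0 a1 (-a4) (-a5) a6 a7.
Proof.
apply/rowP => k; rewrite /app !mxE !big_ord_recr big_ord0 /= !mxE /=.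
by case: k => [[|[|[|[|[|[|[|[|?]]]]]]]] ?] //=; ring.
Qed.

Lemma J2E a0 a1 a2 a3 a4 a5 a6 a7 :
  app J2m (vec8 a0 a1 a2 a3 a4 a5 a6 a7) =
  vec8 ((a4+a6)/2) ((a5+a7)/2) ((a4-a6)/2) ((a5-a7)/2) (a0+a2) (a1+a3) (a0-a2) (a1-a3).
Proof.
apply/rowP => k; rewrite /app !mxE !big_ord_recr big_ord0 /= !mxE /=.
by case: k => [[|[|[|[|[|[|[|[|?]]]]]]]] ?] //=; ring.
Qed.

Lemma J3E a0 a1 a2 a3 a4 a5 a6 a7 :
  app J3m (vec8 a0 a1 a2 a3 a4 a5 a6 a7) =
  vec8 ((a4-a6)/2) ((a5-a7)/2) ((a4+a6)/2) ((a5+a7)/2)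
       (-(a0+a2)) (-(a1+a3)) (a0-a2) (a1-a3).
Proof. by rewrite /J3m app_mul J2E J1E. Qed.

Lemma gmE a0 a1 a2 a3 a4 a5 a6 a7 :
  app gm (vec8 a0 a1 a2 a3 a4 a5 a6 a7) =
  vec8 (2*a0) (-(2*a1)) (-(2*a2)) (2*a3) (-a6) a7 (-a4) a5.
Proof.
apply/rowP => k; rewrite /app !mxE !big_ord_recr big_ord0 /= !mxE /=.
by case: k => [[|[|[|[|[|[|[|[|?]]]]]]]] ?] //=; ring.
Qed.

Lemma gm_invE a0 a1 a2 a3 a4 a5 a6 a7 :
  app gm_inv (vec8 a0 a1 a2 a3 a4 a5 a6 a7) =
  vec8 (a0/2) (-(a1/2)) (-(a2/2)) (a3/2) (-a6) a7 (-a4) a5.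
Proof.
apply/rowP => k; rewrite /app !mxE !big_ord_recr big_ord0 /= !mxE /=.
by case: k => [[|[|[|[|[|[|[|[|?]]]]]]]] ?] //=; ring.
Qed.

Lemma gm_vec8 a0 a1 a2 a3 a4 a5 a6 a7 b0 b1 b2 b3 b4 b5 b6 b7 :
  gf gm (vec8 a0 a1 a2 a3 a4 a5 a6 a7) (vec8 b0 b1 b2 b3 b4 b5 b6 b7) =
  2*(a0*b0 - a1*b1) - 2*(a2*b2 - a3*b3) - (a4*b6 - a5*b7) - (a6*b4 - a7*b5).
Proof.
rewrite /gf -/(app gm _) gmE mxE !big_ord_recr big_ord0 /= !mxE /=; ring.
Qed.

Lemma gm_invariant x y z : gf gm (lieb x y) z = gf gm x (lieb y z).
Proof.
elim/vec8_ind: x => a0 a1 a2 a3 a4 a5 a6 a7; elim/vec8_ind: y => b0 b1 b2 b3 b4 b5 b6 b7.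
elim/vec8_ind: z => c0 c1 c2 c3 c4 c5 c6 c7.
rewrite !lieb_vec8 !gm_vec8; ring.
Qed.

Lemma nijenhuis_J1m x y : nijenhuis J1m x y = 0.
Proof.
elim/vec8_ind: y => b0 b1 b2 b3 b4 b5 b6 b7; elim/vec8_ind: x => a0 a1 a2 a3 a4 a5 a6 a7.
rewrite /nijenhuis; repeat rewrite ?J1E ?lieb_vec8 ?vec8D ?vec8N.
apply: vec8_eq0; by field.
Qed.

Lemma nijenhuis_J2m x y : nijenhuis J2m x y = 0.
Proof.
elim/vec8_ind: y => b0 b1 b2 b3 b4 b5 b6 b7; elim/vec8_ind: x => a0 a1 a2 a3 a4 a5 a6 a7.
rewrite /nijenhuis; repeat rewrite ?J2E ?lieb_vec8 ?vec8D ?vec8N.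
apply: vec8_eq0; by field.
Qed.

Lemma nijenhuis_J3m x y : nijenhuis J3m x y = 0.
Proof.
elim/vec8_ind: y => b0 b1 b2 b3 b4 b5 b6 b7; elim/vec8_ind: x => a0 a1 a2 a3 a4 a5 a6 a7.
rewrite /nijenhuis; repeat rewrite ?J3E ?lieb_vec8 ?vec8D ?vec8N.
apply: vec8_eq0; by field.
Qed.

Lemma hyper_paracomplex_Jm : hyper_paracomplex J1m J2m J3m.
Proof.
split; last by move=> x y; rewrite nijenhuis_J1m nijenhuis_J2m nijenhuis_J3m.
split; [|split; [|split; [|split]]] => x; elim/vec8_ind: x => a0 a1 a2 a3 a4 a5 a6 a7;
  repeat rewrite ?J1E ?J2E ?J3E ?vec8N; congr vec8; by field.
Qed.

Lemma gm_sym : gm^T = gm.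
Proof.
apply/matrixP => i j; rewrite !mxE.
by case: i => [[|[|[|[|[|[|[|[|?]]]]]]]] ?] //=; case: j => [[|[|[|[|[|[|[|[|?]]]]]]]] ?].
Qed.

Lemma gm_mul_inv : gm *m gm_inv = 1%:M.
Proof.
have app_gm_inv x : app gm_inv (app gm x) = x.
  elim/vec8_ind: x => a0 a1 a2 a3 a4 a5 a6 a7.
  rewrite gmE gm_invE; congr vec8; by field.
by apply/row_matrixP => i; rewrite !rowE mulmxA mulmx1; apply: app_gm_inv.
Qed.

Lemma is_metric_gm : is_metric gm.
Proof.
split; first exact: gm_sym.
by rewrite -unitfE -unitmxE; case: (mulmx1_unit gm_mul_inv).
Qed.

Lemma hyperparahermitian_gm : hyperparahermitian gm J1m J2m J3m.
Proof.
split; first exact: is_metric_gm.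
move=> x y; elim/vec8_ind: y => b0 b1 b2 b3 b4 b5 b6 b7.
elim/vec8_ind: x => a0 a1 a2 a3 a4 a5 a6 a7.
rewrite !J1E !J2E !J3E !gm_vec8; split; [|split]; by field.
Qed.

End ExplicitStructure.

Theorem mainTheorem4 (R : realType) :
  exists g J1 J2 J3 : 'M[R]_8, invariant_strong_HPKT g J1 J2 J3.
Proof.
exists (gm R), (J1m R), (J2m R), (J3m R).
apply: invariant_strong_HPKT_of_ad_invariant.
- exact: gm_invariant.
- exact: hyper_paracomplex_Jm.
- exact: hyperparahermitian_gm.
Qed.
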